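(* Let $G$ be an embedded graph and let $\tilde G$ be the embedded graph obtained by subdividing every edge $e$ of $G$ exactly once by a new vertex $\tilde e$, placed on the curve of $e$ between one endpoint of $e$ and the first crossing point of $e$ in that direction (so that the resulting edge from that endpoint to $\tilde e$ is uncrossed); let $D(\tilde G)=\{\tilde e: e\in E(G)\}$. If $(A,X,B)$ is a co-separating triple of $(\Lambda(\tilde G),\tilde G)$ with $X\cap V(\tilde G)\subseteq D(\tilde G)$, then the set $\{e\in E(G):\tilde e\in X\}$ is an edge cut of $G$ (its removal disconnects $G$).
   Context: Graphs may have parallel edges. A drawing of a graph $G$ maps the vertices to distinct points of the plane and each edge to a curve (a homeomorphic image of $[0,1]$) joining the images of its endpoints whose interior contains no vertex. A crossing is a point interior to two distinct edges; no third edge passes through it, and the two edges cross transversally there. An embedded graph is a graph together with such a drawing. Its planarization $H^\times$ is the plane graph obtained by inserting a dummy-vertex at every crossing point; for an edge $e$, $e^\times$ denotes the walk in $H^\times$ from one endpoint of $e$ to the other through the crossing points on $e$ in order, and $V(e^\times)$ its vertex set. $\Lambda(H)$ is obtained from $H^\times$ by inserting inside each face of $H^\times$ a new face-vertex adjacent to all vertices of $H^\times$ on the boundary of that face. A co-separating triple of $(\Lambda(H),H)$ is a partition $(A,X,B)$ of $V(\Lambda(H))$ such that: (C1) each of $A,X,B$ contains at least one vertex of $H$; (C2) no edge of $\Lambda(H)$ has one endpoint in $A$ and the other in $B$; (C3) for every edge $e\in E(H)$, either both endpoints of $e$ lie in $X$, or $V(e^\times)\subseteq A\cup X$, or $V(e^\times)\subseteq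 B\cup X$. *)

From HB Require Import structures.
From mathcomp Require Import all_boot all_order all_algebra.
From mathcomp Require Import all_classical all_reals all_analysis.
From Stdlib Require Import Relations.
Set Implicit Arguments. Unset Strict Implicit. Unset Printing Implicit Defensive.
Import Order.TTheory GRing.Theory Num.Theory.
Import numFieldNormedType.Exports.
Local Open Scope classical_set_scope.
Local Open Scope ring_scope.

(* Vertices of Lambda(H): points of the plane (vertices of the planarization
   H^x, i.e. vertex points and crossing points) and face-vertices (a face is
   represented by the open set of the plane it occupies). *)
Inductive lvert (R : realType) := LPt of (R * R) | LFace of set (R * R).
Arguments LPt {R}. Arguments LFace {R}.

Section Drawing.
Context {R : realType} {V E : finType}.
(* An embedded graph: edges E with endpoints src/tgt (parallel edges allowed),
   vertex positions vpos, and each edge e drawn as the curve t |-> curve e t,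
   t in [0,1]. *)
Variables (src tgt : E -> V) (vpos : V -> R * R) (curve : E -> R -> R * R).

Definition I01 : set R := [set t | 0 <= t <= 1].
Definition I01o : set R := [set t | 0 < t < 1].
Definition ecurve (e : E) : set (R * R) := curve e @` I01.
Definition einter (e : E) : set (R * R) := curve e @` I01o.
Definition unit_disk : set (R * R) := [set y | y.1 ^+ 2 + y.2 ^+ 2 < 1].

Definition transversal_at (C1 C2 : set (R * R)) (p : R * R) : Prop :=
  exists (U : set (R * R)) (h g : R * R -> R * R),
    open U /\ U p /\ h p = ((0 : R), (0 : R)) /\
    (forall x, U x -> unit_disk (h x) /\ g (h x) = x) /\
    (forall y, unit_disk y -> U (g y) /\ h (g y) = y) /\
    {within U, continuous h} /\ {within unit_disk, continuous g} /\
    (forall x, U x -> (C1 x <-> (h x).2 = 0)) /\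
    (forall x, U x -> (C2 x <-> (h x).1 = 0)).

Definition crossing (p : R * R) : Prop :=
  exists e f : E, e <> f /\ einter e p /\ einter f p.

Definition is_drawing : Prop :=
  injective vpos /\
  (forall e, {within I01, continuous (curve e)}) /\
  (forall e s t, I01 s -> I01 t -> curve e s = curve e t -> s = t) /\
  (forall e, curve e 0 = vpos (src e) /\ curve e 1 = vpos (tgt e)) /\
  (forall e v, ~ einter e (vpos v)) /\
  (forall e f g p, e <> f -> einter e p -> einter f p -> ecurve g p ->
      g = e \/ g = f) /\
  (forall e f p, e <> f -> einter e p -> einter f p ->
      transversal_at (ecurve e) (ecurve f) p) /\
  finite_set crossing.

Definition hvert (p : R * R) : Prop := (exists v, p = vpos v) \/ crossing p.
Definition drawn (p : R * R) : Prop := (exists v, p = vpos v) \/ (exists e, ecurve e p).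
Definition is_face (F : set (R * R)) : Prop :=
  exists x, ~ drawn x /\ F = connected_component (~` drawn) x.
Definition hadj (p q : R * R) : Prop :=
  exists e s t, I01 s /\ I01 t /\ s < t /\ curve e s = p /\ curve e t = q /\
    hvert p /\ hvert q /\ (forall r, s < r < t -> ~ hvert (curve e r)).

Definition lam_vert (x : lvert R) : Prop :=
  match x with LPt p => hvert p | LFace F => is_face F end.

Definition lam_adj (x y : lvert R) : Prop :=
  match x, y with
  | LPt p, LPt q => hadj p q \/ hadj q p
  | LFace F, LPt p => is_face F /\ hvert p /\ closure F p
  | LPt p, LFace F => is_face F /\ hvert p /\ closure F p
  | LFace _, LFace _ => False
  end.

Definition evert (e : E) : set (R * R) := [set p | hvert p /\ ecurve e p].

Definition coseparating (A X B : set (lvert R)) : Prop :=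
  (forall x, lam_vert x <-> A x \/ X x \/ B x) /\
  (forall x, ~ (A x /\ X x)) /\ (forall x, ~ (A x /\ B x)) /\
  (forall x, ~ (X x /\ B x)) /\
  (exists v, A (LPt (vpos v))) /\ (exists v, X (LPt (vpos v))) /\
  (exists v, B (LPt (vpos v))) /\
  (forall a b, A a -> B b -> ~ lam_adj a b) /\
  (forall e, (X (LPt (vpos (src e))) /\ X (LPt (vpos (tgt e))))
     \/ (forall p, evert e p -> A (LPt p) \/ X (LPt p))
     \/ (forall p, evert e p -> B (LPt p) \/ X (LPt p))).

End Drawing.

Section Subdivision.
Context {R : realType} {V E : finType}.
(* Subdivided graph: vertices V + E (inr e is the new vertex ~e),
   edges E * bool: (e,false) runs src e -> ~e, (e,true) runs ~e -> tgt e.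
   ~e sits at curve e (tau e). *)
Definition sub_src (src : E -> V) (d : E * bool) : V + E :=
  if d.2 then inr d.1 else inl (src d.1).
Definition sub_tgt (tgt : E -> V) (d : E * bool) : V + E :=
  if d.2 then inl (tgt d.1) else inr d.1.
Definition sub_pos (vpos : V -> R * R) (curve : E -> R -> R * R) (tau : E -> R)
  (x : V + E) : R * R :=
  match x with inl v => vpos v | inr e => curve e (tau e) end.
Definition sub_curve (curve : E -> R -> R * R) (tau : E -> R) (d : E * bool)
  (t : R) : R * R :=
  if d.2 then curve d.1 (tau d.1 + (1 - tau d.1) * t)
  else curve d.1 (tau d.1 * t).

(* ~e is placed strictly inside e, between the endpoint chosen by side e
   (false: src e, true: tgt e) and the first crossing of e in that direction,
   so the piece from that endpoint to ~e is uncrossed. *)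
Definition valid_subdiv (curve : E -> R -> R * R) (side : E -> bool)
  (tau : E -> R) : Prop :=
  forall e, 0 < tau e < 1 /\
    (forall s, (if side e then tau e <= s < 1 else 0 < s <= tau e) ->
       forall f, f <> e -> ~ einter curve f (curve e s)).
End Subdivision.

Definition edge_cut {V E : finType} (src tgt : E -> V) (S : set E) : Prop :=
  exists u w : V, ~ clos_refl_trans V
    (fun a b => exists e, ~ S e /\
       ((src e = a /\ tgt e = b) \/ (src e = b /\ tgt e = a))) u w.

From mathcomp Require Import all_boot all_order all_algebra.
From mathcomp Require Import all_classical all_reals all_analysis.
From Stdlib Require Import Relations.
Set Implicit Arguments. Unset Strict Implicit. Unset Printing Implicit Defensive.
Import Order.TTheory GRing.Theory Num.Theory.
Local Open Scope classical_set_scope.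
Local Open Scope ring_scope.

(* By (C3), and since A and B are disjoint, two endpoints of an edge that
   both lie outside X are on the same side.  In the subdivided graph no vertex
   of G lies in X, and neither does ~e for e outside the proposed cut, so the
   two halves of such an e put src e, ~e and tgt e on the same side.  Thus
   "lies in A" is invariant along the edges of G outside the cut, while (C1)
   yields vertices of G in A and in B (moving from ~e to src e if necessary). *)

Lemma edge_cut_of_invariant (V E : finType) (src tgt : E -> V) (S : set E)
    (P : V -> Prop) (u w : V) :
  (forall e, ~ S e -> (P (src e) <-> P (tgt e))) -> P u -> ~ P w ->
  edge_cut src tgt S.
Proof.
move=> inv Pu nPw; exists u, w => conn; apply: nPw.
elim: conn Pu => {u w} [a b [e [nSe [[<- <-]|[<- <-]]]]|//|a b c _ IHab _ IHbc].
- by move/(inv e nSe).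
- by move/(inv e nSe).
- by move=> /IHab /IHbc.
Qed.

Section Coseparating.
Context {R : realType} {V E : finType}.
Variables (src tgt : E -> V) (vpos : V -> R * R) (curve : E -> R -> R * R).

Lemma I01_0 : I01 (0 : R). Proof. by rewrite /I01 /= lexx ler01. Qed.
Lemma I01_1 : I01 (1 : R). Proof. by rewrite /I01 /= lexx ler01. Qed.

Lemma evert_src e : curve e 0 = vpos (src e) ->
  evert vpos curve e (vpos (src e)).
Proof. by move=> c0; split; [left; exists (src e) | exists 0; [exact: I01_0|]]. Qed.

Lemma evert_tgt e : curve e 1 = vpos (tgt e) ->
  evert vpos curve e (vpos (tgt e)).
Proof. by move=> c1; split; [left; exists (tgt e) | exists 1; [exact: I01_1|]]. Qed.

Lemma coseparating_same_side (A X B : set (lvert R)) e :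
  coseparating src tgt vpos curve A X B ->
  curve e 0 = vpos (src e) -> curve e 1 = vpos (tgt e) ->
  ~ X (LPt (vpos (src e))) -> ~ X (LPt (vpos (tgt e))) ->
  (A (LPt (vpos (src e))) <-> A (LPt (vpos (tgt e)))).
Proof.
move=> [_ [_ [disjAB [_ [_ [_ [_ [_ C3]]]]]]]] c0 c1 nXs nXt.
have := disjAB (LPt (vpos (src e))); have := disjAB (LPt (vpos (tgt e))).
have [[Xs Xt]|[onA|onB]] := C3 e; first by [].
- by have := onA _ (evert_src c0); have := onA _ (evert_tgt c1); tauto.
- by have := onB _ (evert_src c0); have := onB _ (evert_tgt c1); tauto.
Qed.

End Coseparating.

Section Subdivision.
Context {R : realType} {V E : finType}.
Variables (src tgt : E -> V) (vpos : V -> R * R) (curve : E -> R -> R * R)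
  (tau : E -> R).
Hypothesis curve_ends :
  forall e, curve e 0 = vpos (src e) /\ curve e 1 = vpos (tgt e).

Let spos := sub_pos vpos curve tau.
Let scurve := sub_curve curve tau.

Lemma sub_curve0 d : scurve d 0 = spos (sub_src src d).
Proof.
by case: d => e [] /=; rewrite /scurve /sub_curve /= ?mulr0 ?addr0 //;
  case: (curve_ends e).
Qed.

Lemma sub_curve1 d : scurve d 1 = spos (sub_tgt tgt d).
Proof.
by case: d => e [] /=; rewrite /scurve /sub_curve /= mulr1 ?subrKC //;
  case: (curve_ends e).
Qed.

Variables (A X B : set (lvert R)).
Hypothesis coseps : coseparating (sub_src src) (sub_tgt tgt) spos scurve A X B.
Hypothesis X_subdivision : forall x, X (LPt (spos x)) -> exists e, x = inr e.

Lemma vertex_notin_X v : ~ X (LPt (vpos v)).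
Proof. by move=> /(@X_subdivision (inl v)) [e]. Qed.

Lemma subdivided_edge_same_side d :
  ~ X (LPt (curve d.1 (tau d.1))) ->
  (A (LPt (spos (sub_src src d))) <-> A (LPt (spos (sub_tgt tgt d)))).
Proof.
move=> nXd; apply: (coseparating_same_side coseps (sub_curve0 d) (sub_curve1 d));
  by case: d nXd => e [] //= _; exact: vertex_notin_X.
Qed.

Lemma src_same_side e : ~ X (LPt (curve e (tau e))) ->
  (A (LPt (vpos (src e))) <-> A (LPt (curve e (tau e)))).
Proof. exact: (@subdivided_edge_same_side (e, false)). Qed.

Lemma tgt_same_side e : ~ X (LPt (curve e (tau e))) ->
  (A (LPt (curve e (tau e))) <-> A (LPt (vpos (tgt e)))).
Proof. exact: (@subdivided_edge_same_side (e, true)). Qed.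

Lemma vertex_in_A : exists u, A (LPt (vpos u)).
Proof.
have [_ [disjAX [_ [_ [[[v|e] Ax] _]]]]] := coseps; first by exists v.
exists (src e); apply/src_same_side => // Xe.
exact: (disjAX (LPt (curve e (tau e)))).
Qed.

Lemma vertex_notin_A : exists w, ~ A (LPt (vpos w)).
Proof.
have [_ [_ [disjAB [disjXB [_ [_ [[[v|e] Bx] _]]]]]]] := coseps.
  by exists v => Av; exact: (disjAB (LPt (vpos v))).
have nXe : ~ X (LPt (curve e (tau e))).
  by move=> Xe; exact: (disjXB (LPt (curve e (tau e)))).
exists (src e) => /(src_same_side nXe) Ae.
exact: (disjAB (LPt (curve e (tau e)))).
Qed.

End Subdivision.

Theorem mainTheorem6 (R : realType) (V E : finType)
  (src tgt : E -> V) (vpos : V -> R * R) (curve : E -> R -> R * R)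
  (side : E -> bool) (tau : E -> R) (A X B : set (lvert R)) :
  is_drawing src tgt vpos curve ->
  valid_subdiv curve side tau ->
  coseparating (sub_src src) (sub_tgt tgt) (sub_pos vpos curve tau)
    (sub_curve curve tau) A X B ->
  (forall x : V + E, X (LPt (sub_pos vpos curve tau x)) -> exists e, x = inr e) ->
  edge_cut src tgt [set e | X (LPt (curve e (tau e)))].
Proof.
move=> [_ [_ [_ [ends _]]]] _ coseps X_subdiv.
have [u Au] := vertex_in_A ends coseps X_subdiv.
have [w nAw] := vertex_notin_A ends coseps X_subdiv.
apply: (@edge_cut_of_invariant _ _ _ _ _ (fun v => A (LPt (vpos v))) u w) => // e nXe.
by rewrite (src_same_side ends coseps X_subdiv nXe) (tgt_same_side ends coseps X_subdiv nXe).
Qed.
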